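(* Let $R$ be a field and consider persistence modules over $(R, \mathbb{R}_{\ge 0}, \mathbb{R})$. If $M$ is finitely presented and bounded, then $M$ admits a critical series and $C(\varepsilon(M)) = \chi_{\mathcal{O}}(M)$, i.e. for every $g \in \mathbb{R}$ the value $\chi_{\mathcal{O}}(M)(g)$ equals the coefficient of $x^g$ in $C(\varepsilon(M))$.
   Context: A persistence module over $(R,\mathbb{R}_{\ge 0},\mathbb{R})$ is an $\mathbb{R}$-graded $R$-vector space $M = \bigoplus_{g\in\mathbb{R}} M_g$ with an action of the monoid ring $P = R[\mathbb{R}_{\ge 0}]$ such that the monomial $s \in \mathbb{R}_{\ge0}$ maps $M_g$ into $M_{g+s}$; morphisms are graded $P$-module homomorphisms. Free persistence modules are direct sums of shifted copies of $P$ (generated by homogeneous elements); $M$ is finitely presented if it is the cokernel of a morphism between finitely generated free persistence modules, and bounded if $\{g : M_g \ne 0\}$ is contained in a bounded interval. For $a<b$ real, $\operatorname{Region}[a,b)$ is the persistence module that is $R$ in degrees $g\in[a,b)$ and $0$ elsewhere, with the action of $s$ from degree $g$ to $g+s$ the identity if $[g,g+s]\subseteq[a,b)$ and $0$ otherwise. Every finitely presented bounded $M$ is isomorphic to a finite direct sum $\bigoplus_{i=1}^n \operatorname{Region}[\alpha_i,\alpha_i+\ell_i)$ with $\alpha_i\in\mathbb{R}$, $0<\ell_i<\infty$; its barcode is $\varepsilon(M) = \sum_{i=1}^n x^{\alpha_i}y^{\ell_i}$ (a formal sum with real exponents), and for a barcode $f = \sum_i x^{\alpha_i}y^{\ell_i}$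 one sets $B(f) = \sum_i x^{\alpha_i}$, $D(f) = \sum_i x^{\alpha_i+\ell_i}$, $C(f) = B(f)-D(f)$ (formal finite integer combinations of $x^g$, $g\in\mathbb{R}$). For $g\in\mathbb{R}$, $M_{\prec g} = \sum_{h<g} (g-h)M_h \subseteq M_g$ and $\mathcal{O}_g(M) = M_g/M_{\prec g}$; this is an additive functor (morphisms act by the induced maps). Given a free resolution $\cdots\to F_1\to F_0\to M\to 0$, let $H_i(\mathcal{O}_g)(M)$ be the $i$-th homology of $\cdots\to\mathcal{O}_g(F_1)\to\mathcal{O}_g(F_0)\to 0$. $M$ admits a critical series if for each $g$ all these are finite-dimensional and only finitely many are nonzero; then $\chi_{\mathcal{O}}(M)(g) = \sum_i (-1)^i \dim H_i(\mathcal{O}_g)(M)$, identified with the formal sum $\sum_g \chi_{\mathcal{O}}(M)(g)x^g$. *)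

(* with Stdlib's concrete reals R (a realType via Rstruct)
   as the grading group. The coefficient field is called K (the paper's R). *)
From Stdlib Require Import Reals.
From HB Require Import structures.
From mathcomp Require Import all_boot all_order all_algebra.
From mathcomp Require Import Rstruct.
Unset Strict Implicit.
Unset Printing Implicit Defensive.
Import Order.TTheory GRing.Theory Num.Theory.
Local Open Scope ring_scope.

Notation RR := Rdefinitions.R.

Unset Implicit Arguments.
(* A persistence module over (K, R_{>=0}, R): the graded pieces M_g and,
   for g <= h, the action of the monomial (h - g) : M_g -> M_h.
   The monoid-action axioms become identity and composition laws. *)
Record pmod (K : fieldType) := PMod {
  sp : RR -> lmodType K;
  mp : forall (g h : RR), g <= h -> sp g -> sp h;
  mp_lin : forall g h (H : g <= h), linear (mp g h H);
  mp_id : forall g (H : g <= g) (x : sp g), mp g g H x = x;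
  mp_comp : forall g h k (H1 : g <= h) (H2 : h <= k) (H3 : g <= k) (x : sp g),
      mp h k H2 (mp g h H1 x) = mp g k H3 x
}.

Arguments sp {K}.
Arguments mp {K} p {g h}.

Record pmor (K : fieldType) (M N : pmod K) := PMor {
  mor :> forall g, sp M g -> sp N g;
  mor_lin : forall t, linear (mor t);
  mor_nat : forall g h (H : g <= h) (x : sp M g),
      mp N H (mor g x) = mor h (mp M H x)
}.

Arguments mor {K M N}.
Arguments pmor {K}.
Set Implicit Arguments.

(* (e_i)_{i in I}, e_i homogeneous of degree a i, is a basis of M as a
   P-module: M is then the direct sum of the shifted copies P(-a i). *)
Definition free_basis (K : fieldType) (M : pmod K) (I : Type) (a : I -> RR)
    (e : forall i, sp M (a i)) : Prop :=
  forall g : RR,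
    (forall m : sp M g, exists (n : nat) (j : 'I_n -> I)
        (hj : forall k, a (j k) <= g) (c : 'I_n -> K),
        m = \sum_(k < n) c k *: mp M (hj k) (e (j k)))
    /\
    (forall (n : nat) (j : 'I_n -> I) (hj : forall k, a (j k) <= g)
        (c : 'I_n -> K),
        injective j ->
        \sum_(k < n) c k *: mp M (hj k) (e (j k)) = 0 ->
        forall k, c k = 0).

Definition is_free (K : fieldType) (M : pmod K) : Prop :=
  exists (I : Type) (a : I -> RR) (e : forall i, sp M (a i)), @free_basis K M _ a e.

Definition is_fg_free (K : fieldType) (M : pmod K) : Prop :=
  exists (m : nat) (a : 'I_m -> RR) (e : forall i, sp M (a i)), @free_basis K M _ a e.

Definition exact_at (K : fieldType) (A B C : pmod K) (f : pmor A B)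
    (h : pmor B C) : Prop :=
  forall g (y : sp B g), h g y = 0 <-> exists x : sp A g, y = f g x.

Definition surj_mor (K : fieldType) (A B : pmod K) (h : pmor A B) : Prop :=
  forall g (y : sp B g), exists x : sp A g, y = h g x.

Definition fin_presented (K : fieldType) (M : pmod K) : Prop :=
  exists (F1 F0 : pmod K) (phi : pmor F1 F0) (psi : pmor F0 M),
    [/\ is_fg_free F1, is_fg_free F0, exact_at phi psi & surj_mor psi].

Definition pm_bounded (K : fieldType) (M : pmod K) : Prop :=
  exists a b : RR, forall g, (exists v : sp M g, v != 0) -> a <= g <= b.

(* Region[a,b): K in degrees g in [a,b), 0 elsewhere, encoded as the row
   space K^(1 or 0); the action g -> h is the identity iff [g,h] ⊆ [a,b). *)
Definition inreg (a b g : RR) : bool := (a <= g) && (g < b).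

Definition reg_mp (K : fieldType) (a b : RR) (g h : RR) (H : g <= h)
    (v : 'rV[K]_(inreg a b g)) : 'rV[K]_(inreg a b h) :=
  v *m const_mx (if inreg a b g && inreg a b h then 1 else 0).

(* a finite direct sum of regions Region[alpha_k, alpha_k + l_k),
   k < n, with alpha = (s k).1, l = (s k).2 > 0, is internally isomorphic
   to M: there are morphisms iota_k : Region_k -> M such that in every
   degree the induced map from the direct sum is bijective. *)
Definition region_sp (K : fieldType) (a b : RR) (g : RR) : lmodType K :=
  'rV[K]_(inreg a b g).

Definition barcode_decomp (K : fieldType) (M : pmod K) (n : nat)
    (s : 'I_n -> RR * RR) : Prop :=
  (forall k, 0 < (s k).2) /\
  exists iota : forall k g, region_sp K (s k).1 ((s k).1 + (s k).2) g -> sp M g,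
    [/\ (forall k t, linear (iota k t)),
        (forall k g h (H : g <= h) v,
            mp M H (iota k g v)
            = iota k h (reg_mp H v)),
        (forall g (v w : forall k, region_sp K (s k).1 ((s k).1 + (s k).2) g),
            \sum_(k < n) iota k g (v k) = \sum_(k < n) iota k g (w k) ->
            forall k, v k = w k)
      & (forall g (m : sp M g), exists v : forall k,
            region_sp K (s k).1 ((s k).1 + (s k).2) g,
            m = \sum_(k < n) iota k g (v k))].

(* coefficient of x^g in C(epsilon(M)) = B - D for the barcode s *)
Definition C_coef (n : nat) (s : 'I_n -> RR * RR) (g : RR) : int :=
  (#|[pred k : 'I_n | (s k).1 == g]|%:Z
   - #|[pred k : 'I_n | (s k).1 + (s k).2 == g]|%:Z)%R.

(* M_{< g} = sum_{h<g} (g-h) M_h, as a predicate on M_g *)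
Definition prec (K : fieldType) (M : pmod K) (g : RR) (x : sp M g) : Prop :=
  exists (n : nat) (h : 'I_n -> RR) (H : forall k, h k < g)
    (m : forall k, sp M (h k)),
    x = \sum_(k < n) mp M (ltW (H k)) (m k).

(* free resolution  ... -> F 1 --d 0--> F 0 --eps--> M -> 0 *)
Definition free_resolution (K : fieldType) (M : pmod K) (F : nat -> pmod K)
    (d : forall i, pmor (F i.+1) (F i)) (eps : pmor (F 0%N) M) : Prop :=
  [/\ forall i, is_free (F i), surj_mor eps, exact_at (d 0%N) eps
    & forall i, exact_at (d i.+1) (d i)].

(* dim (Z / B) = n for subspaces B ⊆ Z of V (given as predicates) *)
Definition qdim (K : fieldType) (V : lmodType K) (Z B : V -> Prop) (n : nat)
  : Prop :=
  exists v : 'I_n -> V,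
    [/\ forall k, Z (v k),
        forall c : 'I_n -> K, B (\sum_(k < n) c k *: v k) -> forall k, c k = 0
      & forall z, Z z -> exists c : 'I_n -> K, B (z - \sum_(k < n) c k *: v k)].

(* H_i of  ... -> O_g(F 1) -> O_g(F 0) -> 0 , where O_g(F) = F_g / F_{<g}.
   H_i = (preimage in F_i,g of ker) / (preimage of im) *)
Definition hcycle (K : fieldType) (F : nat -> pmod K)
    (d : forall i, pmor (F i.+1) (F i)) (g : RR) (i : nat) : sp (F i) g -> Prop :=
  match i as i0 return sp (F i0) g -> Prop with
  | 0%N => fun _ => True
  | j.+1 => fun x => prec (d j g x)
  end.

Definition hbound (K : fieldType) (F : nat -> pmod K)
    (d : forall i, pmor (F i.+1) (F i)) (g : RR) (i : nat) (x : sp (F i) g)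
  : Prop :=
  exists (y : sp (F i.+1) g) (p : sp (F i) g), prec p /\ x = d i g y + p.

Definition hdim (K : fieldType) (F : nat -> pmod K)
    (d : forall i, pmor (F i.+1) (F i)) (g : RR) (i n : nat) : Prop :=
  qdim (@hcycle K F d g i) (@hbound K F d g i) n.

(* M admits a critical series, computed from the resolution (F, d), and
   chi_O(M)(g) = c for every g with value c g *)
Definition crit_series_value (K : fieldType) (F : nat -> pmod K)
    (d : forall i, pmor (F i.+1) (F i)) (chi : RR -> int) : Prop :=
  forall g : RR,
    [/\ forall i, exists n, hdim d g i n,
        exists N, forall i, (N <= i)%N -> hdim d g i 0
      & forall (N : nat) (dims : nat -> nat),
          (forall i, hdim d g i (dims i)) ->
          (forall i, (N <= i)%N -> dims i = 0%N) ->
          \sum_(i < N) (-1) ^+ i * (dims i)%:Z = chi g].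

From Stdlib Require Import Reals.
From HB Require Import structures.
From mathcomp Require Import all_boot all_order all_algebra.
From mathcomp Require Import Rstruct.
From mathcomp Require Import finmap.
From mathcomp.multinomials Require Import monalg.
From mathcomp Require Import boolp.
Import Order.TTheory GRing.Theory Num.Theory.
Local Open Scope ring_scope.

(* Let F be any free resolution of M. Since the structure maps of a free module
   are injective, an element of F_{i+2,g} whose boundary lies in F_{i+1,<g} is
   congruent modulo F_{i+2,<g} to a cycle, hence to a boundary: H_i(O_g)(M) = 0
   for i >= 2.
   Right exactness of O_g gives H_0 = M_g / M_{<g}, and H_1 is identified with
   ker (M_e -> M_g) for any e < g such that M_e -> M_h is bijective for
   e <= h < g. For M = (+)_k Region[a_k, a_k + l_k) these spaces have as bases
   the bars born at g and the bars dying at g, so chi_O(M)(g) is the coefficient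
   of x^g in B - D. Free resolutions exist because every persistence module is
   covered by the free module on its homogeneous elements. *)

Set Implicit Arguments.
Unset Strict Implicit.
Unset Printing Implicit Defensive.

Section LinearFun.
Variables (K : fieldType) (U V : lmodType K) (f : U -> V).
Hypothesis f_linear : linear f.

Lemma linear_fun0 : f 0 = 0.
Proof.
have := f_linear 1 0 0; rewrite !scale1r addr0 => f00.
by apply: (addrI (f 0)); rewrite addr0 -f00.
Qed.

Lemma linear_funZ c x : f (c *: x) = c *: f x.
Proof. by rewrite -[c *: x]addr0 f_linear linear_fun0 addr0. Qed.

End LinearFun.

Section PmodLinear.
Variables (K : fieldType) (M N : pmod K) (phi : pmor M N) (g h : RR) (H : g <= h).

HB.instance Definition _ :=
  GRing.isLinear.Build K (@sp K M g) (@sp K M h) _ (@mp K M g h H) (@mp_lin K M g h H).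

HB.instance Definition _ :=
  GRing.isLinear.Build K (@sp K M g) (@sp K N g) _ (@mor K M N phi g) (@mor_lin K M N phi g).

End PmodLinear.

Section PmodBasics.
Variable K : fieldType.
Implicit Types M N : pmod K.

Lemma mp_irr M g h (H H' : g <= h) x : mp M H x = mp M H' x.
Proof. by rewrite (eq_irrelevance H H'). Qed.

Lemma mp_trans M g h k (H1 : g <= h) (H2 : h <= k) x :
  mp M H2 (mp M H1 x) = mp M (le_trans H1 H2) x.
Proof. exact: mp_comp. Qed.

Lemma prec_mp M g h (H : h <= g) (y : sp M h) : h < g -> prec (mp M H y).
Proof.
move=> hg; exists 1%N, (fun _ => h), (fun _ => hg), (fun _ => y).
by rewrite big_ord1; apply: mp_irr.
Qed.

(* M_{<g} is a directed union: finitely many h_k < g are dominated by one h < g. *)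
Lemma precP M g (x : sp M g) :
  prec x <-> exists h (hg : h < g) (y : sp M h), x = mp M (ltW hg) y.
Proof.
split; last by case=> h [hg [y ->]]; apply: prec_mp.
case=> n [h [hg [m ->]]]; elim: n h hg m => [|n IHn] h hg m.
  have g1g : g - 1 < g by rewrite ltrBlDr ltrDl ltr01.
  by exists (g - 1), g1g, 0; rewrite big_ord0 raddf0.
rewrite big_ord_recr /=.
have [h0 [h0g [y0 ->]]] := IHn _ (fun k => hg (widen_ord (leqnSn n) k))
  (fun k => m (widen_ord (leqnSn n) k)).
have hmax : Num.max h0 (h ord_max) < g by rewrite gt_max h0g hg.
have le0 : h0 <= Num.max h0 (h ord_max) by rewrite le_max lexx.
have le1 : h ord_max <= Num.max h0 (h ord_max) by rewrite le_max lexx orbT.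
exists _, hmax, (mp M le0 y0 + mp M le1 (m ord_max)).
by rewrite linearD /= !mp_trans; congr (_ + _); apply: mp_irr.
Qed.

Lemma prec_above M g e (x : sp M g) : e < g -> prec x ->
  exists h (eh : e <= h) (hg : h < g) (y : sp M h), x = mp M (ltW hg) y.
Proof.
move=> eg /precP [h [hg [y ->]]].
have hmax : Num.max h e < g by rewrite gt_max hg eg.
have le0 : h <= Num.max h e by rewrite le_max lexx.
have le1 : e <= Num.max h e by rewrite le_max lexx orbT.
by exists _, le1, hmax, (mp M le0 y); rewrite mp_trans; apply: mp_irr.
Qed.

Lemma prec0 M g : prec (0 : sp M g).
Proof.
have g1g : g - 1 < g by rewrite ltrBlDr ltrDl ltr01.
by rewrite -(raddf0 (mp M (ltW g1g))); apply: prec_mp.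
Qed.

Lemma precD M g (x y : sp M g) : prec x -> prec y -> prec (x + y).
Proof.
move=> /precP [h [hg [u ->]]] /precP [h' [h'g [u' ->]]].
have hmax : Num.max h h' < g by rewrite gt_max hg h'g.
have le0 : h <= Num.max h h' by rewrite le_max lexx.
have le1 : h' <= Num.max h h' by rewrite le_max lexx orbT.
rewrite (mp_irr _ (le_trans le0 (ltW hmax))) (mp_irr _ (le_trans le1 (ltW hmax))).
by rewrite -!mp_trans -linearD; apply: prec_mp.
Qed.

Lemma precZ M g c (x : sp M g) : prec x -> prec (c *: x).
Proof. by move=> /precP [h [hg [u ->]]]; rewrite -linearZ; apply: prec_mp. Qed.

Lemma precB M g (x y : sp M g) : prec x -> prec y -> prec (x - y).
Proof. by move=> px py; apply: precD => //; rewrite -scaleN1r; apply: precZ. Qed.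

Lemma prec_sum M g (I : Type) (r : seq I) (P : pred I) (F : I -> sp M g) :
  (forall i, P i -> prec (F i)) -> prec (\sum_(i <- r | P i) F i).
Proof. by move=> PF; apply: (big_ind (@prec _ M g)) => //; [apply: prec0 | apply: precD]. Qed.

Lemma prec_mor M N (phi : pmor M N) g (x : sp M g) : prec x -> prec (phi g x).
Proof. by move=> /precP [h [hg [u ->]]]; rewrite -mor_nat; apply: prec_mp. Qed.

End PmodBasics.

Section QuotientDim.
Variables (K : fieldType) (V : lmodType K).
Implicit Types Z B : V -> Prop.

Definition subspace B :=
  [/\ B 0, forall x y, B x -> B y -> B (x + y) & forall c x, B x -> B (c *: x)].

Lemma subspace_sum B (I : Type) (r : seq I) (P : pred I) (F : I -> V) :
  subspace B -> (forall i, P i -> B (F i)) -> B (\sum_(i <- r | P i) F i).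
Proof. by case=> B0 BD _ PF; apply: big_ind. Qed.

Lemma qdim0 Z B : (forall z, Z z -> B z) -> qdim Z B 0.
Proof.
move=> ZB; exists (fun _ => 0); split; [by case | by move=> c _; case |].
by move=> z /ZB Bz; exists (fun _ => 0); rewrite big_ord0 subr0.
Qed.

Lemma qdim_card Z B (I : finType) (A : pred I) (w : I -> V) :
  (forall k, A k -> Z (w k)) ->
  (forall c : I -> K, B (\sum_(k in A) c k *: w k) -> forall k, A k -> c k = 0) ->
  (forall z, Z z -> exists c : I -> K, B (z - \sum_(k in A) c k *: w k)) ->
  qdim Z B #|A|.
Proof.
move=> Zw w_free w_span; exists (fun i => w (enum_val i)); split.
- by move=> i; apply/Zw/enum_valP.
- move=> c Bc i; pose r := enum_rank_in (enum_valP i).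
  have := w_free (c \o r); rewrite big_enum_val /=.
  under eq_bigr do rewrite /r enum_valK_in.
  by move=> /(_ Bc _ (enum_valP i)); rewrite /r enum_valK_in.
- by move=> z /w_span [c]; rewrite big_enum_val; exists (c \o enum_val).
Qed.

Lemma exists_left_kernel_row m n (C : 'M[K]_(n, m)) :
  (m < n)%N -> exists2 lam : 'rV_n, lam != 0 & lam *m C = 0.
Proof.
move=> mn; have : kermx C != 0.
  by rewrite kermx_eq0 -row_leq_rank -ltnNge (leq_ltn_trans (rank_leq_col C)).
by case/rowV0Pn => lam /sub_kermxP lamC lam0; exists lam.
Qed.

Lemma qdim_leq Z B n m : subspace B -> qdim Z B n -> qdim Z B m -> (n <= m)%N.
Proof.
move=> sB [v [Zv v_free _]] [w [_ _ w_span]].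
have [c Bc] := fin_all_exists (fun k => w_span (v k) (Zv k)).
rewrite leqNgt; apply/negP => /(exists_left_kernel_row (\matrix_(k, j) c k j)).
set C := \matrix_(k, j) c k j; case=> lam lam0 lamC; apply: (negP lam0).
apply/eqP/rowP => k; rewrite mxE; apply: v_free => {k}.
have : B (\sum_k lam 0 k *: (v k - \sum_j c k j *: w j)).
  by apply: subspace_sum => // k _; case: sB => _ _; apply.
suff -> : \sum_k lam 0 k *: (v k - \sum_j c k j *: w j)
        = \sum_k lam 0 k *: v k - \sum_j (lam *m C) 0 j *: w j.
  by rewrite lamC [X in _ - X]big1 ?subr0 // => j _; rewrite mxE scale0r.
under eq_bigr do rewrite scalerBr; rewrite sumrB; congr (_ - _).
under [RHS]eq_bigr do rewrite mxE scaler_suml.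
rewrite exchange_big; apply: eq_bigr => k _; rewrite scaler_sumr.
by apply: eq_bigr => j _; rewrite mxE scalerA.
Qed.

Lemma qdim_uniq Z B n m : subspace B -> qdim Z B n -> qdim Z B m -> n = m.
Proof.
by move=> sB qn qm; apply/anti_leq; rewrite (qdim_leq sB qn qm) (qdim_leq sB qm qn).
Qed.

End QuotientDim.

Lemma qdim_transport (K : fieldType) (V W : lmodType K) (ZV BV : V -> Prop)
    (ZW BW : W -> Prop) (R : V -> W -> Prop) n :
  R 0 0 ->
  (forall x y x' y' c, R x y -> R x' y' -> R (c *: x + x') (c *: y + y')) ->
  (forall w, ZW w -> exists v, ZV v /\ R v w) ->
  (forall v, ZV v -> exists w, ZW w /\ R v w) ->
  (forall v w, R v w -> (BV v <-> BW w)) ->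
  qdim ZW BW n -> qdim ZV BV n.
Proof.
move=> R0 RL ZWV ZVW RB [w [Zw w_free w_span]].
have [v Rv] := fin_all_exists (fun k => ZWV (w k) (Zw k)).
have Rsum (c : 'I_n -> K) : R (\sum_k c k *: v k) (\sum_k c k *: w k).
  apply: (big_ind2 R) => // [x1 x2 y1 y2 r1 r2 | k _].
    by have := RL _ _ _ _ 1 r1 r2; rewrite !scale1r.
  by have := RL _ _ _ _ (c k) (Rv k).2 R0; rewrite !addr0.
exists v; split; first by move=> k; case: (Rv k).
  by move=> c /(RB _ _ (Rsum c)); apply: w_free.
move=> z /ZVW [w0 [Zw0 Rzw]]; have [c Bc] := w_span w0 Zw0; exists c.
apply/(RB _ (w0 - \sum_k c k *: w k)) => //.
by have := RL _ _ _ _ (-1) (Rsum c) Rzw; rewrite !scaleN1r ![- _ + _]addrC.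
Qed.

Section FreeBasis.
Variables (K : fieldType) (M : pmod K) (I : Type) (a : I -> RR) (e : forall i, sp M (a i)).

Lemma mp_basis_eq i i' g (H : a i <= g) (H' : a i' <= g) :
  i = i' -> mp M H (e i) = mp M H' (e i').
Proof. by move=> ii'; subst i'; apply: mp_irr. Qed.

Lemma combination_injective h n (j : 'I_n -> I) (hj : forall k, a (j k) <= h)
    (c : 'I_n -> K) :
  exists n' (j' : 'I_n' -> I) (hj' : forall t, a (j' t) <= h) (c' : 'I_n' -> K),
    injective j' /\ forall g (H : h <= g),
      mp M H (\sum_k c k *: mp M (hj k) (e (j k)))
      = \sum_t c' t *: mp M (le_trans (hj' t) H) (e (j' t)).
Proof.
pose s : seq {classic I} := undup [seq (j k : {classic I}) | k <- enum 'I_n].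
have js k : (j k : {classic I}) \in s by rewrite mem_undup map_f ?mem_enum.
pose p k : 'I_(size s) := Ordinal (etrans (index_mem _ _) (js k)).
pose j' (t : 'I_(size s)) : I := tnth (in_tuple s) t.
have hj' t : a (j' t) <= h.
  have : (j' t : {classic I}) \in s by apply: mem_tnth.
  by rewrite mem_undup => /mapP [k _ ->].
exists (size s), j', hj', (fun t => \sum_(k | p k == t) c k); split.
  by move=> t1 t2; apply/(tuple_uniqP (in_tuple s)); apply: undup_uniq.
move=> g H; rewrite linear_sum (partition_big p xpredT) //=; apply: eq_bigr => t _.
rewrite scaler_suml; apply: eq_bigr => k /eqP pk; rewrite linearZ /= mp_trans.
congr (_ *: _); apply: mp_basis_eq.
by rewrite -pk /j' (tnth_nth (j k : {classic I})) nth_index.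
Qed.

Lemma free_basis_mp_inj : free_basis e ->
  forall h g (H : h <= g) (x : sp M h), mp M H x = 0 -> x = 0.
Proof.
move=> e_basis h g H x Hx; have [n [j [hj [c Ex]]]] := (e_basis h).1 x.
have [n' [j' [hj' [c' [j'_inj Ec]]]]] := combination_injective hj c.
have c'0 : forall t, c' t = 0.
  by apply: ((e_basis g).2 _ _ (fun t => le_trans (hj' t) H) _ j'_inj); rewrite -Ec -Ex.
by rewrite -(@mp_id _ M _ (lexx h) x) Ex Ec big1 // => t _; rewrite c'0 scale0r.
Qed.

End FreeBasis.

Lemma hbound_subspace (K : fieldType) (F : nat -> pmod K)
    (d : forall i, pmor (F i.+1) (F i)) g i :
  subspace (@hbound K F d g i).
Proof.
split.
- by exists 0, 0; rewrite raddf0 addr0; split; first exact: prec0.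
- move=> _ _ [y1 [p1 [pp1 ->]]] [y2 [p2 [pp2 ->]]].
  by exists (y1 + y2), (p1 + p2); rewrite raddfD addrACA; split; first exact: precD.
- move=> c _ [y [p [pp ->]]]; exists (c *: y), (c *: p).
  by rewrite linearZ scalerDr; split; first exact: precZ.
Qed.

Section Resolution.
Variables (K : fieldType) (M : pmod K) (F : nat -> pmod K)
  (d : forall i, pmor (F i.+1) (F i)) (eps : pmor (F 0%N) M).
Hypothesis F_resolution : free_resolution d eps.

Lemma d_d0 i g x : d i g (d i.+1 g x) = 0.
Proof. by case: F_resolution => _ _ _ ex; apply/(ex i g); exists x. Qed.

Lemma eps_d0 g x : eps g (d 0%N g x) = 0.
Proof. by case: F_resolution => _ _ ex _; apply/(ex g); exists x. Qed.

Lemma ker_d i g y : d i g y = 0 -> exists x, y = d i.+1 g x.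
Proof. by case: F_resolution => _ _ _ ex; move/(ex i g). Qed.

Lemma ker_eps g y : eps g y = 0 -> exists x, y = d 0%N g x.
Proof. by case: F_resolution => _ _ ex _; move/(ex g). Qed.

Lemma eps_onto g m : exists y, m = eps g y.
Proof. by case: F_resolution => _ eps_surj _ _; apply: eps_surj. Qed.

Lemma resolution_mp_inj i h g (H : h <= g) (x : sp (F i) h) : mp (F i) H x = 0 -> x = 0.
Proof.
case: F_resolution => F_free _ _ _.
by case: (F_free i) => I [a [e /free_basis_mp_inj]]; apply.
Qed.

Lemma hdim_SS0 g i : hdim d g i.+2 0.
Proof.
apply: qdim0 => x /precP [h [hg [y Ey]]].
have /ker_d [z Ez] : d i h y = 0.
  by apply: (@resolution_mp_inj i h g (ltW hg)); rewrite mor_nat -Ey d_d0.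
have /ker_d [w Ew] : d i.+1 g (x - mp (F i.+2) (ltW hg) z) = 0.
  by rewrite raddfB /= -mor_nat -Ez -Ey subrr.
exists w, (mp (F i.+2) (ltW hg) z); split; first exact: prec_mp.
by rewrite -Ew subrK.
Qed.

Lemma hdim0_Og g n : qdim (fun _ : sp M g => True) (@prec K M g) n -> hdim d g 0 n.
Proof.
apply: (qdim_transport (R := fun x m => eps g x = m)) => //.
- exact: raddf0.
- by move=> x y x' y' c <- <-; rewrite linearP.
- by move=> m _; have [y ->] := eps_onto m; exists y.
- by move=> y _; exists (eps g y).
move=> y _ <-; split.
  by case=> x [p [pp ->]]; rewrite raddfD /= eps_d0 add0r; apply: prec_mor.
case/precP => h [hg [m Em]]; have [y' Ey'] := eps_onto m.
have /ker_eps [x Ex] : eps g (y - mp (F 0%N) (ltW hg) y') = 0.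
  by rewrite raddfB /= -mor_nat -Ey' Em subrr.
exists x, (mp (F 0%N) (ltW hg) y'); split; first exact: prec_mp.
by rewrite -Ex subrK.
Qed.

Section FirstHomology.
Variables (g e : RR) (eg : e < g).
Hypothesis mp_onto : forall h (eh : e <= h), h < g ->
  forall m : sp M h, exists m0, m = mp M eh m0.
Hypothesis mp_inj : forall h (eh : e <= h), h < g ->
  forall m0 : sp M e, mp M eh m0 = 0 -> m0 = 0.

(* [x] in F_{1,g} and [m] in M_e correspond when, modulo F_{1,<g}, d x lifts to
   some y in F_{0,e} with eps y = m. *)
Definition h1_rel (x : sp (F 1%N) g) (m : sp M e) :=
  exists (y : sp (F 0%N) e) (p : sp (F 1%N) g),
    [/\ prec p, d 0%N g (x - p) = mp (F 0%N) (ltW eg) y & eps e y = m].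

Lemma h1_rel0 : h1_rel 0 0.
Proof. by exists 0, 0; rewrite subr0 !raddf0; split; first exact: prec0. Qed.

Lemma h1_relP x y x' y' c :
  h1_rel x y -> h1_rel x' y' -> h1_rel (c *: x + x') (c *: y + y').
Proof.
case=> [u [p [pp Ep Eu]]] [u' [p' [pp' Ep' Eu']]].
exists (c *: u + u'), (c *: p + p'); split.
- by apply: precD => //; apply: precZ.
- by rewrite opprD addrACA -scalerBr linearP /= Ep Ep' linearP.
- by rewrite linearP /= Eu Eu'.
Qed.

Lemma h1_rel_ker m : mp M (ltW eg) m = 0 -> exists x, prec (d 0%N g x) /\ h1_rel x m.
Proof.
move=> m0; have [y Ey] := eps_onto m.
have /ker_eps [x Ex] : eps g (mp (F 0%N) (ltW eg) y) = 0 by rewrite -mor_nat -Ey.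
exists x; split; first by rewrite -Ex; apply: prec_mp.
by exists y, 0; rewrite subr0; split; first exact: prec0.
Qed.

Lemma h1_rel_cycle x : prec (d 0%N g x) ->
  exists m, mp M (ltW eg) m = 0 /\ h1_rel x m.
Proof.
case/(prec_above eg) => h [eh [hg [y' Ey']]].
have [m0 Em0] := mp_onto eh hg (eps h y'); have [y0 Ey0] := eps_onto m0.
have /ker_eps [z Ez] : eps h (y' - mp (F 0%N) eh y0) = 0.
  by rewrite raddfB /= -mor_nat -Ey0 Em0 subrr.
exists m0; split.
  by rewrite (mp_irr _ (le_trans eh (ltW hg))) -mp_trans -Em0 mor_nat -Ey' eps_d0.
exists y0, (mp (F 1%N) (ltW hg) z); split; first exact: prec_mp.
  by rewrite raddfB /= Ey' -mor_nat -Ez raddfB /= mp_trans opprB addrC subrK; apply: mp_irr.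
by [].
Qed.

(* If x = d y2 + q then q - p lifts to F_{1,h} with boundary y, by injectivity
   of F_{0,h} -> F_{0,g}; so eps y dies in M_h, and M_e -> M_h is injective. *)
Lemma h1_rel_bound x m : h1_rel x m -> hbound d x -> m = 0.
Proof.
case=> y [p [pp Ep <-]] [y2 [q [pq Ex]]].
have Eq : d 0%N g (q - p) = mp (F 0%N) (ltW eg) y.
  by rewrite -Ep Ex -addrA [RHS]raddfD /= d_d0 add0r.
have [h [eh [hg [r Er]]]] := prec_above eg (precB pq pp).
have Hr : d 0%N h r = mp (F 0%N) eh y.
  apply/eqP; rewrite -subr_eq0; apply/eqP/(@resolution_mp_inj 0%N h g (ltW hg)).
  by rewrite raddfB /= mor_nat -Er Eq mp_trans (mp_irr _ (le_trans eh (ltW hg))) subrr.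
by apply: (mp_inj hg); rewrite mor_nat -Hr eps_d0.
Qed.

Lemma h1_rel_bound0 x : h1_rel x 0 -> hbound d x.
Proof.
case=> y [p [pp Ep /ker_eps [w Ew]]].
have /ker_d [y2 E2] : d 0%N g (x - p - mp (F 1%N) (ltW eg) w) = 0.
  by rewrite raddfB /= Ep -mor_nat -Ew subrr.
exists y2, (p + mp (F 1%N) (ltW eg) w); split.
  by apply: precD => //; apply: prec_mp.
by rewrite -E2 [p + _]addrC addrA !subrK.
Qed.

Lemma hdim1_ker n :
  qdim (fun m : sp M e => mp M (ltW eg) m = 0) (fun m => m = 0) n -> hdim d g 1 n.
Proof.
apply: (qdim_transport (R := h1_rel)); [exact: h1_rel0 | exact: h1_relP |
  exact: h1_rel_ker | exact: h1_rel_cycle |].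
move=> x m Rxm; split; first exact: h1_rel_bound.
by move=> m0; rewrite m0 in Rxm; apply: h1_rel_bound0.
Qed.

End FirstHomology.
End Resolution.

Section BoolRows.
Variable K : fieldType.

Lemma rowb0 (b : bool) (v : 'rV[K]_b) : ~~ b -> v = 0.
Proof. by case: b v => // v _; apply: thinmx0. Qed.

Lemma rowbP (b : bool) (v : 'rV[K]_b) : exists c : K, v = c *: const_mx 1.
Proof.
case: b v => v; last by exists 0; rewrite scale0r; apply: thinmx0.
by exists (v 0 0); apply/rowP => j; rewrite !mxE (ord1 j) mulr1.
Qed.

Lemma rowb_scale_eq0 (b : bool) (c : K) : b -> (c *: const_mx 1 : 'rV[K]_b) = 0 -> c = 0.
Proof. by case: b => // _ /rowP /(_ 0); rewrite !mxE mulr1. Qed.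

Lemma rowb_mul_const (b1 b2 : bool) :
  (const_mx 1 : 'rV[K]_b1) *m const_mx (if b1 && b2 then 1 else 0)
  = (if b1 && b2 then const_mx 1 else 0 : 'rV[K]_b2).
Proof.
case: b1 b2 => [] [] /=; apply/rowP => j; rewrite !mxE.
- by rewrite big_ord1 !mxE mulr1.
all: by rewrite big1 // => i _; rewrite !mxE mulr0.
Qed.

End BoolRows.

Section Barcode.
Variables (K : fieldType) (M : pmod K) (n : nat) (s : 'I_n -> RR * RR).

Definition in_bar k g := inreg (s k).1 ((s k).1 + (s k).2) g.

(* [u k g] is the image in M_g of the generator 1 of the k-th bar. *)
Lemma barcode_generators : barcode_decomp M s ->
  exists u : forall (k : 'I_n) g, sp M g,
  [/\ forall g m, exists c : 'I_n -> K, m = \sum_k c k *: u k g,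
      forall g c, \sum_k c k *: u k g = 0 -> forall k, in_bar k g -> c k = 0,
      forall k g, ~~ in_bar k g -> u k g = 0 &
      forall k g h (H : g <= h),
        mp M H (u k g) = if in_bar k g && in_bar k h then u k h else 0].
Proof.
case=> _ [iota [iota_lin iota_nat iota_inj iota_onto]].
exists (fun k g => iota k g (const_mx 1)); split.
- move=> g m; have [v ->] := iota_onto g m.
  have [c Ec] := fin_all_exists (fun k => rowbP (v k)).
  by exists c; apply: eq_bigr => k _; rewrite Ec (linear_funZ (iota_lin k g)).
- move=> g c u0 k k_in; apply: (rowb_scale_eq0 k_in).
  apply: (iota_inj g (fun k => c k *: const_mx 1) (fun _ => 0)).
  rewrite [RHS]big1 => [|i _]; last exact: linear_fun0 (iota_lin i g).
  by rewrite -[RHS]u0; apply: eq_bigr => i _; rewrite (linear_funZ (iota_lin i g)).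
- by move=> k g k_out; rewrite (rowb0 (const_mx 1) k_out) (linear_fun0 (iota_lin k g)).
- move=> k g h H; rewrite iota_nat /reg_mp rowb_mul_const.
  by case: ifP => // _; rewrite (linear_fun0 (iota_lin k h)).
Qed.

Definition no_endpoint_between e g := forall k,
  ((s k).1 < g -> (s k).1 <= e) /\ ((s k).1 + (s k).2 < g -> (s k).1 + (s k).2 <= e).

Lemma exists_gap g : exists2 e, e < g & no_endpoint_between e g.
Proof.
pose below x := if x < g then x else g - 1.
have g1_lt : g - 1 < g by rewrite ltrBlDr ltrDl ltr01.
have below_lt x : below x < g by rewrite /below; case: ifP.
pose e := \big[Num.max/(g - 1)]_k Num.max (below (s k).1) (below ((s k).1 + (s k).2)).
exists e; first by apply/bigmax_ltP; split=> // k _; rewrite gt_max !below_lt.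
move=> k; have := le_bigmax (g - 1)
  (fun k => Num.max (below (s k).1) (below ((s k).1 + (s k).2))) k.
rewrite ge_max /below => /andP [le1 le2].
by split=> lt_g; [move: le1 | move: le2]; rewrite lt_g.
Qed.

Variable u : forall (k : 'I_n) g, sp M g.
Hypothesis u_span : forall g m, exists c : 'I_n -> K, m = \sum_k c k *: u k g.
Hypothesis u_free :
  forall g c, \sum_k c k *: u k g = 0 -> forall k, in_bar k g -> c k = 0.
Hypothesis u_out : forall k g, ~~ in_bar k g -> u k g = 0.
Hypothesis u_mp : forall k g h (H : g <= h),
  mp M H (u k g) = if in_bar k g && in_bar k h then u k h else 0.
Hypothesis bar_pos : forall k, 0 < (s k).2.

Lemma in_barE k g : in_bar k g = ((s k).1 <= g) && (g < (s k).1 + (s k).2).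
Proof. by []. Qed.

Lemma in_bar_birth k : in_bar k (s k).1.
Proof. by rewrite in_barE lexx ltrDl bar_pos. Qed.

Lemma mp_combination g h (H : g <= h) (c : 'I_n -> K) :
  mp M H (\sum_k c k *: u k g)
  = \sum_k (if in_bar k g && in_bar k h then c k else 0) *: u k h.
Proof.
rewrite linear_sum; apply: eq_bigr => k _.
by rewrite linearZ /= u_mp; case: ifP; rewrite ?scaler0 ?scale0r.
Qed.

Lemma combination_mkcond (A : pred 'I_n) (c : 'I_n -> K) g :
  \sum_(k in A) c k *: u k g = \sum_k (if k \in A then c k else 0) *: u k g.
Proof. by rewrite big_mkcond; apply: eq_bigr => k _; case: ifP; rewrite ?scale0r. Qed.

Lemma combinationB (c c' : 'I_n -> K) g :
  \sum_k c k *: u k g - \sum_k c' k *: u k g = \sum_k (c k - c' k) *: u k g.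
Proof. by rewrite -sumrB; apply: eq_bigr => k _; rewrite scalerBl. Qed.

Lemma combination_out0 (c : 'I_n -> K) g :
  (forall k, in_bar k g -> c k = 0) -> \sum_k c k *: u k g = 0.
Proof.
move=> c0; apply: big1 => k _; have [k_in|k_out] := boolP (in_bar k g).
  by rewrite c0 // scale0r.
by rewrite u_out // scaler0.
Qed.

(* Every bar alive at [g] but not born at [g] was born earlier, so its
   generator lies in M_{<g}. *)
Lemma qdim_Og_births g :
  qdim (fun _ : sp M g => True) (@prec K M g) #|[pred k | (s k).1 == g]|.
Proof.
apply: (qdim_card (w := fun k => u k g)) => //.
- move=> c /precP [h [hg [y Ey]]] k /= /eqP birth_k.
  have [c' Ec'] := u_span y.
  have c_eq0 : \sum_i ((if i \in [pred i | (s i).1 == g] then c i else 0)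
      - (if in_bar i h && in_bar i g then c' i else 0)) *: u i g = 0.
    by rewrite -combinationB -(mp_combination (ltW hg)) -Ec' -Ey -combination_mkcond subrr.
  have k_out : in_bar k h = false by rewrite in_barE birth_k leNgt hg.
  have := @u_free g _ c_eq0 k; rewrite inE /= birth_k eqxx k_out subr0; apply.
  by rewrite -birth_k in_bar_birth.
- move=> z _; have [c Ez] := u_span z; exists c.
  rewrite combination_mkcond Ez combinationB; apply: prec_sum => k _.
  case: ifP => birth_k; first by rewrite subrr scale0r; apply: prec0.
  apply: precZ; have [k_in|k_out] := boolP (in_bar k g); last first.
    by rewrite u_out //; apply: prec0.
  have le_kg : (s k).1 <= g by case/andP: k_in.
  have lt_kg : (s k).1 < g by rewrite lt_neqAle le_kg andbT; move: birth_k; rewrite inE => ->.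
  by have := u_mp k le_kg; rewrite in_bar_birth k_in /= => <-; apply: prec_mp.
Qed.

Section Gap.
Variables (g e : RR) (eg : e < g).
Hypothesis gap : no_endpoint_between e g.

Lemma qdim_ker_deaths :
  qdim (fun m : sp M e => mp M (ltW eg) m = 0) (fun m => m = 0)
    #|[pred k | (s k).1 + (s k).2 == g]|.
Proof.
apply: (qdim_card (w := fun k => u k e)).
- move=> k /eqP death_k.
  by rewrite u_mp (_ : in_bar k g = false) ?andbF // in_barE death_k ltxx andbF.
- move=> c; rewrite combination_mkcond => /u_free c0 k /eqP death_k.
  have k_in : in_bar k e.
    by rewrite in_barE death_k eg andbT; apply: (gap k).1; rewrite -death_k ltrDl bar_pos.
  by have := c0 k k_in; rewrite inE /= death_k eqxx.
- move=> z; have [c ->] := u_span z; rewrite mp_combination => /u_free c0; exists c.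
  rewrite (combination_mkcond [pred k | (s k).1 + (s k).2 == g]) combinationB.
  apply: combination_out0 => k k_in; case: ifP => death_k; first by rewrite subrr.
  have k_in_g : in_bar k g.
    move: (k_in); rewrite !in_barE => /andP [birth_le end_gt].
    rewrite (le_trans birth_le (ltW eg)) /= ltNge; apply/negP => end_le.
    have end_lt : (s k).1 + (s k).2 < g.
      by rewrite lt_neqAle end_le andbT; move: death_k; rewrite inE => ->.
    by move: ((gap k).2 end_lt); rewrite leNgt end_gt.
  by have := c0 k k_in_g; rewrite k_in k_in_g subr0.
Qed.

Lemma gap_mp_onto h (eh : e <= h) : h < g -> forall m : sp M h, exists m0, m = mp M eh m0.
Proof.
move=> hg m; have [c ->] := u_span m; exists (\sum_k c k *: u k e).
rewrite mp_combination; apply: eq_bigr => k _.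
have [k_in|k_out] := boolP (in_bar k h); last by rewrite u_out // !scaler0.
have k_in_e : in_bar k e.
  move: (k_in); rewrite !in_barE => /andP [birth_le end_gt].
  by rewrite (le_lt_trans eh end_gt) andbT; apply: (gap k).1; apply: le_lt_trans hg.
by rewrite k_in_e.
Qed.

Lemma gap_mp_inj h (eh : e <= h) : h < g ->
  forall m0 : sp M e, mp M eh m0 = 0 -> m0 = 0.
Proof.
move=> hg m0; have [c ->] := u_span m0; rewrite mp_combination => /u_free c0.
apply: combination_out0 => k k_in; have k_in_h : in_bar k h.
  move: (k_in); rewrite !in_barE => /andP [birth_le end_gt].
  rewrite (le_trans birth_le eh) /= ltNge; apply/negP => end_le.
  by have := (gap k).2 (le_lt_trans end_le hg); rewrite leNgt end_gt.
by have := c0 k k_in_h; rewrite k_in k_in_h.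
Qed.

End Gap.
End Barcode.

Section FreeModule.
Variables (K : fieldType) (I : choiceType) (a : I -> RR).

(* In degree [g], the free module on generators of degrees [a i] is the space of
   finite combinations of the generators with [a i <= g]. *)
Definition gen_below (g : RR) : {pred {malg K[I]}} :=
  fun x => all (fun i => a i <= g) (msupp x).

Lemma gen_belowP g x : reflect (forall i, i \in msupp x -> a i <= g) (x \in gen_below g).
Proof. exact: allP. Qed.

Lemma gen_below_submod_closed g : GRing.submod_closed (gen_below g).
Proof.
split; first by apply/gen_belowP => i; rewrite msupp0 in_fset0.
move=> c x y /gen_belowP x_below /gen_belowP y_below; apply/gen_belowP => i.
move/(fsubsetP (msuppD_le (c *: x) y)); rewrite in_fsetU => /orP [|/y_below //].
by move/(fsubsetP (msuppZ_le c x)); apply: x_below.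
Qed.

HB.instance Definition _ g :=
  GRing.isSubmodClosed.Build K _ (gen_below g) (gen_below_submod_closed g).
Definition free_sp (g : RR) := {x : {malg K[I]} | x \in gen_below g}.
HB.instance Definition _ g := [isSub of free_sp g for @sval _ (fun x => x \in gen_below g)].
HB.instance Definition _ g := [Choice of free_sp g by <:].
HB.instance Definition _ g := [SubChoice_isSubLmodule of free_sp g by <:].

Lemma gen_below_mono g h x : g <= h -> x \in gen_below g -> x \in gen_below h.
Proof. by move=> gh /gen_belowP x_below; apply/gen_belowP => i /x_below /le_trans; apply. Qed.

Definition free_mp g h (H : g <= h) (x : free_sp g) : free_sp h :=
  Sub (val x) (gen_below_mono H (valP x)).

Lemma val_free_mp g h (H : g <= h) x : val (free_mp H x) = val x.
Proof. exact: SubK. Qed.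

Lemma free_mp_linear g h (H : g <= h) : linear (free_mp H).
Proof. by move=> c x y; apply: val_inj; rewrite val_free_mp !linearP. Qed.

Lemma free_mp_id g (H : g <= g) x : free_mp H x = x.
Proof. by apply: val_inj; rewrite val_free_mp. Qed.

Lemma free_mp_comp g h k (H1 : g <= h) (H2 : h <= k) (H3 : g <= k) x :
  free_mp H2 (free_mp H1 x) = free_mp H3 x.
Proof. by apply: val_inj; rewrite !val_free_mp. Qed.

Definition free_pmod : pmod K :=
  @PMod K (fun g => (free_sp g : lmodType K)) free_mp free_mp_linear free_mp_id free_mp_comp.

Lemma free_gen_below i : << (1 : K) *g i >> \in gen_below (a i).
Proof. by apply/gen_belowP => j /(fsubsetP msuppU_le); rewrite in_fset1 => /eqP ->. Qed.

Definition free_gen i : sp free_pmod (a i) := Sub << (1 : K) *g i >> (free_gen_below i).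

Lemma free_gen_basis : free_basis (M := free_pmod) free_gen.
Proof.
move=> g; split.
- move=> x; pose S := msupp (val x).
  have hj (k : 'I_(size S)) : a (tnth (in_tuple S) k) <= g.
    by apply: (gen_belowP _ _ (valP x)); apply: mem_tnth.
  exists (size S), (tnth (in_tuple S)), hj, (fun k => (val x)@_(tnth (in_tuple S) k)).
  apply: val_inj; rewrite raddf_sum /= {1}(monalgE (val x)) (big_tnth _ _ S).
  apply: eq_bigr => k _; apply/malgP => i.
  by rewrite !mcoeffZ !mcoeffU; case: eqP; rewrite ?mulr1 ?mulr0.
- move=> n j hj c j_inj c0 k.
  have := congr1 (fun x : free_sp g => (val x)@_(j k)) c0.
  rewrite raddf_sum raddf0 /= raddf_sum (bigD1 k) //=.
  rewrite mcoeffZ mcoeffU eqxx mulr1n mulr1 big1 ?addr0 // => k' k'k.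
  by rewrite mcoeffZ mcoeffU (inj_eq j_inj) (negbTE k'k) mulr0n mulr0.
Qed.

Lemma free_pmod_free : is_free free_pmod.
Proof. by exists I, a, free_gen; apply: free_gen_basis. Qed.

Section Extension.
Variables (N : pmod K) (v : forall i, sp N (a i)).

(* [mp N] extended by [0] to pairs [g > h], so that it can be summed over the
   support without a dependent proof of [a i <= g]. *)
Definition mp_or0 g h (x : sp N g) : sp N h :=
  if Bool.bool_dec (g <= h) true is left H then mp N H x else 0.

Lemma mp_or0E g h (H : g <= h) x : mp_or0 h x = mp N H x.
Proof. by rewrite /mp_or0; case: Bool.bool_dec => [H'|]; [apply: mp_irr | rewrite H]. Qed.

Definition free_ext g (x : free_sp g) : sp N g :=
  \sum_(i <- msupp (val x)) (val x)@_i *: mp_or0 g (v i).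

Lemma free_extE g (x : free_sp g) (D : {fset I}) : (msupp (val x) `<=` D)%fset ->
  free_ext x = \sum_(i <- D) (val x)@_i *: mp_or0 g (v i).
Proof.
move=> xD; rewrite /free_ext (big_fset_incl _ xD) // => i _ i_out.
by rewrite mcoeff_outdom // scale0r.
Qed.

Lemma free_ext_linear g : linear (@free_ext g).
Proof.
move=> c x y; pose D := (msupp (val x) `|` msupp (val y))%fset.
have xyD : (msupp (val (c *: x + y)%R) `<=` D)%fset.
  rewrite linearP /=; apply: fsubset_trans (msuppD_le (c *: val x) (val y)) _.
  by apply: fsetSU; apply: msuppZ_le.
have := free_extE xyD; have := free_extE (fsubsetUl (msupp (val x)) (msupp (val y))).
have := free_extE (fsubsetUr (msupp (val x)) (msupp (val y))).
move=> -> -> ->; rewrite scaler_sumr -big_split; apply: eq_bigr => i _.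
by rewrite linearP mcoeffD mcoeffZ scalerDl scalerA.
Qed.

Lemma free_ext_nat g h (H : g <= h) (x : free_sp g) :
  mp N H (free_ext x) = free_ext (free_mp H x).
Proof.
rewrite /free_ext val_free_mp linear_sum; apply: eq_big_seq => i i_supp /=.
have ig : a i <= g by apply: (gen_belowP _ _ (valP x)).
rewrite linearZ /= (mp_or0E ig) (mp_or0E (le_trans ig H)) mp_trans.
by congr (_ *: _); apply: mp_irr.
Qed.

Definition free_extM : pmor free_pmod N :=
  @PMor K free_pmod N free_ext free_ext_linear free_ext_nat.

Lemma free_ext_gen i : free_ext (free_gen i : free_sp (a i)) = v i.
Proof.
rewrite /free_ext SubK msuppU oner_eq0 big_seq_fset1 mcoeffUU scale1r.
by rewrite (mp_or0E (lexx (a i))) mp_id.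
Qed.

End Extension.
End FreeModule.

Section Cover.
Variables (K : fieldType) (N : pmod K) (P : forall g, sp N g -> bool).
Hypothesis P0 : forall g, P (0 : sp N g).
Hypothesis PP : forall g c (x y : sp N g), P x -> P y -> P (c *: x + y).
Hypothesis P_mp : forall g h (H : g <= h) (x : sp N g), P x -> P (mp N H x).

Definition cover_gen (i : {g : RR & sp N g}) : sp N (projT1 i) :=
  if P (projT2 i) then projT2 i else 0.

Definition cover : pmod K := free_pmod K (@projT1 RR (sp N)).
Definition cover_map : pmor cover N := free_extM cover_gen.

Lemma cover_image g y : P y <-> exists x, y = cover_map g x.
Proof.
split=> [Py | [x ->]].
  exists (free_gen K (@projT1 RR (sp N)) (existT _ g y)).
  transitivity (cover_gen (existT _ g y)); first by rewrite /cover_gen /= Py.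
  exact: esym (free_ext_gen cover_gen (existT _ g y)).
apply: (big_ind (@P g)) => [||i _]; first exact: P0.
  by move=> u w Pu Pw; have := PP 1 Pu Pw; rewrite scale1r.
rewrite -[_ *: _]addr0; apply: PP (P0 g); rewrite /mp_or0.
case: Bool.bool_dec => [H|_]; last exact: P0.
by apply: P_mp; rewrite /cover_gen; case: ifP.
Qed.

End Cover.

Section Kernel.
Variables (K : fieldType) (A B : pmod K) (phi : pmor A B).

Definition in_ker g (x : sp A g) := phi g x == 0.

Lemma in_ker0 g : in_ker (0 : sp A g).
Proof. by rewrite /in_ker raddf0. Qed.

Lemma in_kerP g c (x y : sp A g) : in_ker x -> in_ker y -> in_ker (c *: x + y).
Proof. by rewrite /in_ker linearP /= => /eqP -> /eqP ->; rewrite scaler0 addr0. Qed.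

Lemma in_ker_mp g h (H : g <= h) (x : sp A g) : in_ker x -> in_ker (mp A H x).
Proof. by rewrite /in_ker -mor_nat => /eqP ->; rewrite raddf0. Qed.

Lemma cover_ker g y : phi g y = 0 <-> exists x, y = cover_map (@in_ker) g x.
Proof.
apply: iff_trans (rwP eqP) (cover_image _ _ _ y).
- exact: in_ker0.
- exact: in_kerP.
- exact: in_ker_mp.
Qed.

End Kernel.

Section ResolutionExists.
Variables (K : fieldType) (M : pmod K).

(* The source of each stage depends on the previous stage, hence the record. *)
Record stage :=
  Stage { stage_src : pmod K; stage_tgt : pmod K; stage_map : pmor stage_src stage_tgt }.

Fixpoint res_stage (i : nat) : stage :=
  if i is i'.+1 then Stage (cover_map (@in_ker K _ _ (stage_map (res_stage i'))))
  else Stage (cover_map (fun g (_ : sp M g) => true)).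

Definition res_F i := stage_src (res_stage i).
Definition res_d i : pmor (res_F i.+1) (res_F i) := stage_map (res_stage i.+1).
Definition res_eps : pmor (res_F 0) M := stage_map (res_stage 0).

Lemma res_free_resolution : free_resolution res_d res_eps.
Proof.
split.
- by case=> [|i]; apply: free_pmod_free.
- by move=> g y; apply/(cover_image (P := fun g (_ : sp M g) => true)).
- by move=> g y; apply: cover_ker.
- by move=> i g y; apply: cover_ker.
Qed.

End ResolutionExists.

Lemma crit_series_value_of_H0_H1 (K : fieldType) (F : nat -> pmod K)
    (d : forall i, pmor (F i.+1) (F i)) (n0 n1 : RR -> nat) :
  (forall g, hdim d g 0 (n0 g)) -> (forall g, hdim d g 1 (n1 g)) ->
  (forall g i, hdim d g i.+2 0) ->
  crit_series_value d (fun g => (n0 g)%:Z - (n1 g)%:Z).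
Proof.
move=> h0 h1 h2 g.
pose D i := match i with 0 => n0 g | 1 => n1 g | _ => 0%N end.
have hD i : hdim d g i (D i) by case: i => [|[|i]].
split; [by move=> i; exists (D i) | by exists 2%N => -[|[|i]] |].
move=> N dims hdims dims0.
have dimsE i : dims i = D i by apply: qdim_uniq (hbound_subspace d g i) (hdims i) (hD i).
under eq_bigr do rewrite dimsE.
case: N dims0 => [|[|N]] dims0.
- by have := dimsE 0%N; have := dimsE 1%N; rewrite !dims0 // /= => <- <-; rewrite big_ord0.
- by have := dimsE 1%N; rewrite dims0 // big_ord1 expr0 mul1r /= => <-; rewrite subr0.
- rewrite 2!big_ord_recl big1 ?addr0 => [|i _]; last by rewrite mulr0.
  by rewrite expr0 expr1 mul1r mulN1r.
Qed.

Lemma crit_series_value_barcode (K : fieldType) (M : pmod K) n (s : 'I_n -> RR * RR)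
    (F : nat -> pmod K) (d : forall i, pmor (F i.+1) (F i)) (eps : pmor (F 0%N) M) :
  barcode_decomp M s -> free_resolution d eps -> crit_series_value d (C_coef s).
Proof.
move=> bars F_res; have [u [u_span u_free u_out u_mp]] := barcode_generators bars.
apply: (@crit_series_value_of_H0_H1 _ _ _ (fun g => #|[pred k | (s k).1 == g]|)
  (fun g => #|[pred k | (s k).1 + (s k).2 == g]|)) => [g | g | g i].
- exact (hdim0_Og F_res (qdim_Og_births u_span u_free u_out u_mp bars.1 g)).
- have [e eg gap] := exists_gap s g.
  apply: (hdim1_ker F_res (eg := eg)).
  + exact (gap_mp_onto u_span u_out u_mp gap).
  + exact (gap_mp_inj u_span u_free u_out u_mp gap).
  + exact (qdim_ker_deaths u_span u_free u_out u_mp bars.1 eg gap).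
- exact: hdim_SS0 F_res g i.
Qed.

Theorem proposition6 (K : fieldType) (M : pmod K) :
  fin_presented M -> pm_bounded M ->
  (exists (F : nat -> pmod K) (d : forall i, pmor (F i.+1) (F i))
     (eps : pmor (F 0%N) M), free_resolution d eps) /\
  (forall (n : nat) (s : 'I_n -> RR * RR), barcode_decomp M s ->
   forall (F : nat -> pmod K) (d : forall i, pmor (F i.+1) (F i))
     (eps : pmor (F 0%N) M), free_resolution d eps ->
   crit_series_value d (C_coef s)).
Proof.
(* Finite presentation and boundedness only serve to produce a barcode, which the
   second part takes as a hypothesis. *)
move=> _ _; split=> [|n s bars F d eps F_res].
  by exists (res_F M), (res_d M), (res_eps M); apply: res_free_resolution.
exact: crit_series_value_barcode bars F_res.
Qed.
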